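(* If $\mathbb{K}=(K,+,0)$ is a positive commutative monoid that is weakly cancellative and totally canonically pre-ordered, then the inner consistency property holds for $\mathbb{K}$-relations via the northwest corner method: for any two $\mathbb{K}$-relations $R(X)$, $S(Y)$ with $R[X\cap Y]=S[X\cap Y]$, the northwest corner procedure can be carried out and every northwest corner join $W$ for $R$ and $S$ satisfies $W[X]=R$ and $W[Y]=S$.
   Context: Positive: $p+q=0\Rightarrow p=q=0$. Canonical pre-order: $b\sqsubseteq c$ iff $b+a=c$ for some $a$. Weakly cancellative: $a+b=a+c$ implies $b=c$ or $b=0$ or $c=0$. Totally canonically pre-ordered: $b\sqsubseteq c$ or $c\sqsubseteq b$ for all $b,c$. $\mathbb{K}$-relations: for a finite attribute set $X$ (attributes have domains), a $\mathbb{K}$-relation over $X$ is a finitely supported map $R$ from $X$-tuples (assignments of domain values to attributes) to $K$, support $R'$; $t[Y]$ is restriction; marginals $R[Y](t)=\sum_{r\in R',r[Y]=t}R(r)$. Northwest corner method on a balanced instance $b\in K^m$, $c\in K^n$ ($\sum b_i=\sum c_j$), producing $x_{ij}\in K$: first, for each $i$ with $b_i=0$ set row $i$ of $x$ to $0$ and delete it, likewise for columns with $c_j=0$. If $m=1$ set $x_{1j}=c_j$; if $n=1$ set $x_{i1}=b_i$. Otherwise: if $b_1=c_1$, set $x_{11}=b_1$, the other entries of row 1 and column 1 to $0$, and recurse on $(b_2,\dots,b_m),(c_2,\dots,c_n)$; else if $b_1\sqsubseteq c_1$, choose $a$ with $b_1+a=c_1$, set $x_{11}=b_1$ and $x_{1j}=0$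 for $j\ge2$, and recurse on rows $2..m$ with $(b_2,\dots,b_m)$ and $(a,c_2,\dots,c_n)$; else ($c_1\sqsubseteq b_1$) symmetrically with rows and columns exchanged. A northwest corner join for inner consistent $R(X),S(Y)$ with $Z=X\cap Y$: for each $Z$-tuple $w$ in the support of $R[Z]$, enumerate in any order the $X$-tuples $u_1,\dots,u_p\in R'$ with $u_i[Z]=w$ and the $Y$-tuples $v_1,\dots,v_q\in S'$ with $v_j[Z]=w$, apply the method to $b=(R(u_i))_i$, $c=(S(v_j))_j$, and set $W(u_iv_j)=x_{ij}$ (where $u_iv_j$ is the $X\cup Y$-tuple agreeing with both); $W$ is $0$ on all other $X\cup Y$-tuples. *)

From HB Require Import structures.
From mathcomp Require Import all_boot.
From mathcomp Require Import finmap.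
From mathcomp Require Import boolp.

Set Implicit Arguments.
Unset Strict Implicit.
Unset Printing Implicit Defensive.

Local Open Scope fset_scope.
Local Open Scope fmap_scope.

Section Monoid.
Variables (K : Type) (add : K -> K -> K) (zero : K).

Definition comm_monoid : Prop :=
  [/\ forall a b c, add a (add b c) = add (add a b) c,
      forall a b, add a b = add b a &
      forall a, add zero a = a].

Definition positive_monoid : Prop :=
  forall p q, add p q = zero -> p = zero /\ q = zero.

Definition canon_le (b c : K) : Prop := exists a, add b a = c.

Definition weakly_cancellative : Prop :=
  forall a b c, add a b = add a c -> b = c \/ b = zero \/ c = zero.

Definition totally_canon_preordered : Prop :=
  forall b c, canon_le b c \/ canon_le c b.

Definition nz (k : K) : bool := `[< k <> zero >].

Definition sumK (s : seq K) : K := foldr add zero s.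

(* The northwest corner method.  Matrices x are given as functions         *)
(* nat -> nat -> K, indices 0-based (row i, column j); only entries with    *)
(* i < size b, j < size c are meaningful.                                   *)
(* [with_deletion P b c x] : the zero rows/columns of the instance (b,c)    *)
(* are set to 0 and deleted, and P is run on the remaining instance; the    *)
(* output x' of P is re-indexed into x.                                     *)
Definition with_deletion (P : seq K -> seq K -> (nat -> nat -> K) -> Prop)
  (b c : seq K) (x : nat -> nat -> K) : Prop :=
  exists x' : nat -> nat -> K,
    P (filter nz b) (filter nz c) x' /\
    forall i j, i < size b -> j < size c ->
      x i j = if nz (nth zero b i) && nz (nth zero c j)
              then x' (count nz (take i b)) (count nz (take j c))
              else zero.

(* [nwc_core b c x] : x is a possible output of the method on (b,c) after
   the deletion step (rules tried in the order of the paper). *)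
Inductive nwc_core : seq K -> seq K -> (nat -> nat -> K) -> Prop :=
| nwc_nil (x : nat -> nat -> K) : nwc_core [::] [::] x
| nwc_row (b c : seq K) (x : nat -> nat -> K) :
    size b = 1 ->
    (forall j, j < size c -> x 0 j = nth zero c j) ->
    nwc_core b c x
| nwc_col (b c : seq K) (x : nat -> nat -> K) :
    size b <> 1 -> size c = 1 ->
    (forall i, i < size b -> x i 0 = nth zero b i) ->
    nwc_core b c x
| nwc_eq (b1 c1 : K) (b' c' : seq K) (x : nat -> nat -> K) :
    (1 <= size b')%N -> (1 <= size c')%N ->
    b1 = c1 ->
    x 0 0 = b1 ->
    (forall j, j < size c' -> x 0 j.+1 = zero) ->
    (forall i, i < size b' -> x i.+1 0 = zero) ->
    with_deletion nwc_core b' c' (fun i j => x i.+1 j.+1) ->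
    nwc_core (b1 :: b') (c1 :: c') x
| nwc_le (b1 c1 a : K) (b' c' : seq K) (x : nat -> nat -> K) :
    (1 <= size b')%N -> (1 <= size c')%N ->
    b1 <> c1 ->
    add b1 a = c1 ->
    x 0 0 = b1 ->
    (forall j, j < size c' -> x 0 j.+1 = zero) ->
    with_deletion nwc_core b' (a :: c') (fun i j => x i.+1 j) ->
    nwc_core (b1 :: b') (c1 :: c') x
| nwc_ge (b1 c1 a : K) (b' c' : seq K) (x : nat -> nat -> K) :
    (1 <= size b')%N -> (1 <= size c')%N ->
    b1 <> c1 ->
    ~ canon_le b1 c1 ->
    add c1 a = b1 ->
    x 0 0 = c1 ->
    (forall i, i < size b' -> x i.+1 0 = zero) ->
    with_deletion nwc_core (a :: b') c' (fun i j => x i j.+1) ->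
    nwc_core (b1 :: b') (c1 :: c') x.

Definition nwc (b c : seq K) (x : nat -> nat -> K) : Prop :=
  with_deletion nwc_core b c x.

End Monoid.

(* K-relations.  Attributes range over a choiceType A, values over a       *)
(* choiceType V; an X-tuple is a finite map t : {fmap A -> V} with          *)
(* domf t = X, and t[Y] is the restriction t.[& Y].                          *)
Record krel (K : Type) (zero : K) (A V : choiceType) (X : {fset A}) := KRel {
  krel_fun :> {fmap A -> V} -> K;
  krel_supp : {fset {fmap A -> V}};
  krel_suppP : forall t, t \in krel_supp <-> krel_fun t <> zero;
  krel_dom : forall t, t \in krel_supp -> domf t = X
}.

Section KRel.
Variables (K : Type) (add : K -> K -> K) (zero : K) (A V : choiceType).

Definition marg (X : {fset A}) (R : krel zero V X) (Z : {fset A})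
    (t : {fmap A -> V}) : K :=
  \big[add/zero]_(r <- krel_supp R | r.[& Z] == t) R r.

(* For each
   Z-tuple w in the support of R[Z], us w / vs w enumerate (in some order)
   the tuples u in R' (resp. v in S') with u[Z] = w (resp. v[Z] = w),
   xs w is an output of the northwest corner method on
   (R(u_i))_i, (S(v_j))_j, W(u_i v_j) = (xs w) i j, and W is 0 on all
   other (X ∪ Y)-tuples. *)
Definition nw_join (X Y : {fset A}) (R : krel zero V X) (S : krel zero V Y)
    (W : krel zero V (X `|` Y)) : Prop :=
  let Z := X `&` Y in
  exists (us vs : {fmap A -> V} -> seq {fmap A -> V})
         (xs : {fmap A -> V} -> nat -> nat -> K),
    (forall w, marg R Z w <> zero ->
       [/\ uniq (us w), uniq (vs w),
           us w =i [seq u <- krel_supp R | u.[& Z] == w],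
           vs w =i [seq v <- krel_supp S | v.[& Z] == w] &
           nwc add zero [seq R u | u <- us w] [seq S v | v <- vs w] (xs w)])
    /\ (forall w i j, marg R Z w <> zero ->
          i < size (us w) -> j < size (vs w) ->
          W (nth [fmap] (us w) i + nth [fmap] (vs w) j) = xs w i j)
    /\ (forall t, ~ (exists w i j, [/\ marg R Z w <> zero,
                      i < size (us w), j < size (vs w) &
                      t = nth [fmap] (us w) i + nth [fmap] (vs w) j]) ->
          W t = zero).

End KRel.
Arguments marg : clear implicits.
Arguments marg {K} add {zero A V X} R Z t.
Arguments nw_join : clear implicits.
Arguments nw_join {K} add {zero A V X Y} R S W.

(* Call an instance (b, c) of the transportation problem balanced when b and c
   have the same total.  On a balanced instance without zero entries, each step
   of the northwest corner method saturates the first row or the first column and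
   leaves a residual instance that is again balanced: weak cancellativity removes
   the common summand from the two totals, and positivity ensures that neither
   remaining side is zero.  By induction the method never gets stuck and its
   output is a transportation plan, with row sums b and column sums c.
   For K-relations R, S with R[Z] = S[Z], Z = X ∩ Y, the block of a Z-tuple w
   pairs the values R(u_i) with the values S(v_j); it is balanced because both
   totals are R[Z](w) = S[Z](w).  A northwest corner join W is supported on the
   tuples u_i v_j, so W[X](u_i) is the i-th row sum of the plan of block w, that
   is R(u_i); symmetrically W[Y] = S. *)

From HB Require Import structures.
From mathcomp Require Import all_boot finmap boolp zify.

Set Implicit Arguments.
Unset Strict Implicit.
Unset Printing Implicit Defensive.

Section NorthwestCorner.
Variables (K : Type) (add : K -> K -> K) (zero : K).
Hypothesis HK : comm_monoid add zero.
Hypothesis Hpos : positive_monoid add zero.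
Hypothesis Hwc : weakly_cancellative add zero.
Hypothesis Htot : totally_canon_preordered add.

Let addA : associative add. Proof. by case: HK => A _ _ a b c; rewrite A. Qed.
Let addC : commutative add. Proof. by case: HK. Qed.
Let add0k : left_id zero add. Proof. by case: HK. Qed.
Let addk0 : right_id zero add. Proof. by move=> a; rewrite addC add0k. Qed.
HB.instance Definition _ := Monoid.isComLaw.Build K zero add addA addC add0k.

Local Notation nz := (nz zero).
Local Notation total s := (\big[add/zero]_(k <- s) k).

Lemma nzP k : reflect (k <> zero) (nz k).
Proof. exact: asboolP. Qed.

Lemma nz_eq0 k : ~~ nz k -> k = zero.
Proof. by case: nzP => // /contrapT. Qed.

Lemma big_nz (I : Type) (r : seq I) (F : I -> K) :
  \big[add/zero]_(i <- r | nz (F i)) F i = \big[add/zero]_(i <- r) F i.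
Proof. by rewrite big_mkcond; apply: eq_bigr => i _; case: ifP => // /negbT/nz_eq0. Qed.

Lemma total_filter_nz s : total (filter nz s) = total s.
Proof. by rewrite big_filter big_nz. Qed.

Lemma big_nz_eq (I : eqType) (F : I -> K) (r1 r2 : seq I) :
  uniq r1 -> uniq r2 -> (forall i, F i <> zero -> (i \in r1) = (i \in r2)) ->
  \big[add/zero]_(i <- r1) F i = \big[add/zero]_(i <- r2) F i.
Proof.
move=> r1_uniq r2_uniq r12; rewrite -big_nz -[RHS]big_nz -(big_filter r1) -(big_filter r2).
apply/perm_big/uniq_perm; rewrite ?filter_uniq // => i.
by rewrite !mem_filter; case: nzP => // /r12 ->.
Qed.

Lemma total_neq0 s : all nz s -> 0 < size s -> total s <> zero.
Proof. by case: s => // k s /andP[/nzP k_nz _] _; rewrite big_cons => /Hpos[]. Qed.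

Lemma addI_neq0 a p q : p <> zero -> q <> zero -> add a p = add a q -> p = q.
Proof. by move=> p_nz q_nz /Hwc[|[]]. Qed.

Lemma big_nat_eq0 n (F : nat -> K) :
  (forall i, i < n -> F i = zero) -> \big[add/zero]_(0 <= i < n) F i = zero.
Proof. by move=> F0; rewrite big_nat_cond big1 // => i /andP[/andP[_ /F0]]. Qed.

Definition transport_plan (b c : seq K) (x : nat -> nat -> K) : Prop :=
  (forall i, i < size b -> \big[add/zero]_(0 <= j < size c) x i j = nth zero b i) /\
  (forall j, j < size c -> \big[add/zero]_(0 <= i < size b) x i j = nth zero c j).

Lemma transport_planT b c x :
  transport_plan b c x -> transport_plan c b (fun j i => x i j).
Proof. by case. Qed.

Lemma big_deletion c (g : nat -> K) :
  \big[add/zero]_(0 <= j < size c)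
      (if nz (nth zero c j) then g (count nz (take j c)) else zero)
    = \big[add/zero]_(0 <= k < size (filter nz c)) g k.
Proof.
elim: c g => [|k c IH] g /=; first by rewrite !big_geq.
rewrite big_nat_recl //=; case: ifP => k_nz.
  by rewrite big_nat_recl // -IH.
by rewrite add0k -IH.
Qed.

Lemma nth_filter_nz b i : i < size b -> nz (nth zero b i) ->
  count nz (take i b) < size (filter nz b) /\
  nth zero (filter nz b) (count nz (take i b)) = nth zero b i.
Proof.
elim: b i => [//|k b IH] [|i] /=; first by move=> _ ->.
move=> ib bi_nz; have [lt_count nth_count] := IH i ib bi_nz.
by case: ifP; rewrite /= ?add1n ?add0n.
Qed.

Lemma with_deletion_plan (P : seq K -> seq K -> (nat -> nat -> K) -> Prop) b c x :
  with_deletion zero P b c x ->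
  (forall y, P (filter nz b) (filter nz c) y ->
     transport_plan (filter nz b) (filter nz c) y) ->
  transport_plan b c x.
Proof.
case=> y [Py xE] /(_ y Py)[rows cols]; split=> [i ib|j jc].
  have [bi_nz|bi0] := boolP (nz (nth zero b i)); last first.
    by rewrite (nz_eq0 bi0) big_nat_eq0 // => j jc; rewrite xE // (negbTE bi0).
  have [i'b <-] := nth_filter_nz ib bi_nz; rewrite -(rows _ i'b) -big_deletion.
  by apply: eq_big_nat => j /= jc; rewrite xE // bi_nz.
have [cj_nz|cj0] := boolP (nz (nth zero c j)); last first.
  by rewrite (nz_eq0 cj0) big_nat_eq0 // => i ib; rewrite xE // (negbTE cj0) andbF.
have [j'c <-] := nth_filter_nz jc cj_nz; rewrite -(cols _ j'c) -big_deletion.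
by apply: eq_big_nat => i /= ib; rewrite xE // cj_nz andbT.
Qed.

Lemma plan_single_row b1 c x : total c = b1 ->
  (forall j, j < size c -> x 0 j = nth zero c j) -> transport_plan [:: b1] c x.
Proof.
move=> <- xE; split=> [[|//] _|j jc] /=; last by rewrite big_nat1 xE.
by rewrite [RHS](big_nth zero); apply: eq_big_nat => j /andP[_ /xE].
Qed.

Lemma plan_single_col b c1 x : total b = c1 ->
  (forall i, i < size b -> x i 0 = nth zero b i) -> transport_plan b [:: c1] x.
Proof. by move=> bc1 xE; apply: (transport_planT (plan_single_row bc1 xE)). Qed.

Lemma plan_cons_both b1 b' c' x :
  x 0 0 = b1 -> (forall j, j < size c' -> x 0 j.+1 = zero) ->
  (forall i, i < size b' -> x i.+1 0 = zero) ->
  transport_plan b' c' (fun i j => x i.+1 j.+1) ->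
  transport_plan (b1 :: b') (b1 :: c') x.
Proof.
move=> x00 row0 col0 [rows cols].
split=> [[|i] ib|[|j] jc] /=; rewrite big_nat_recl //.
- by rewrite x00 big_nat_eq0.
- by rewrite col0 // add0k rows.
- by rewrite x00 big_nat_eq0.
- by rewrite row0 // add0k cols.
Qed.

Lemma plan_cons_row b1 a b' c1 c' x : add b1 a = c1 ->
  x 0 0 = b1 -> (forall j, j < size c' -> x 0 j.+1 = zero) ->
  transport_plan b' (a :: c') (fun i j => x i.+1 j) ->
  transport_plan (b1 :: b') (c1 :: c') x.
Proof.
move=> <- x00 row0 [rows cols].
split=> [[|i] ib|[|j] jc] /=.
- by rewrite big_nat_recl // x00 big_nat_eq0.
- exact: rows.
- by rewrite big_nat_recl // x00 (cols 0).
- by rewrite big_nat_recl // row0 // add0k (cols j.+1).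
Qed.

Lemma plan_cons_col b1 b' c1 a c' x : add c1 a = b1 ->
  x 0 0 = c1 -> (forall i, i < size b' -> x i.+1 0 = zero) ->
  transport_plan (a :: b') c' (fun i j => x i j.+1) ->
  transport_plan (b1 :: b') (c1 :: c') x.
Proof.
move=> Ea x00 col0 /transport_planT plan'.
exact: (transport_planT (plan_cons_row Ea x00 col0 plan')).
Qed.

Lemma residual_balance b1 a b' c' :
  all nz b' -> 0 < size b' -> all nz c' -> 0 < size c' ->
  total (b1 :: b') = total (add b1 a :: c') -> total b' = add a (total c').
Proof.
move=> nz_b' b'_gt0 nz_c' c'_gt0; rewrite !big_cons -addA.
apply: addI_neq0; first exact: total_neq0.
by case/Hpos=> _; apply: total_neq0.
Qed.

Lemma residual_balance_eq b1 b' c' :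
  all nz b' -> 0 < size b' -> all nz c' -> 0 < size c' ->
  total (b1 :: b') = total (b1 :: c') -> total b' = total c'.
Proof.
by move=> nz_b' b'_gt0 nz_c' c'_gt0; rewrite -[b1 in b1 :: c']addk0 -[total c']add0k;
  apply: residual_balance.
Qed.

Lemma size_filter_nz b c n : size b + size c < n ->
  size (filter nz b) + size (filter nz c) < n.
Proof. by apply: leq_ltn_trans; rewrite leq_add // size_filter count_size. Qed.

Lemma nwc_plan b c x : total b = total c ->
  nwc add zero b c x -> transport_plan b c x.
Proof.
(* Induction on the size: the occurrences of [nwc_core] under [with_deletion]
   get no induction hypothesis from the generated [nwc_core_ind]. *)
have [n] := ubnP (size b + size c); elim: n b c x => // n IH b c x.
move=> /size_filter_nz bc_n bc /with_deletion_plan; apply=> y.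
move: (filter_all nz b) (filter_all nz c) (etrans (total_filter_nz b) bc) bc_n.
rewrite -(total_filter_nz c); move: (filter nz b) (filter nz c) => b' c'.
move=> nz_b nz_c bc' bc_n' core; case: core nz_b nz_c bc' bc_n' => {b c x bc y b' c'}.
- by move=> x *; split.
- move=> b c x b1 row _ _ bc _; case: b b1 bc => [|b1 [|//]] // _ bc.
  by apply: plan_single_row row; rewrite -bc big_seq1.
- move=> b c x _ c1 col _ _ bc _; case: c c1 bc => [|c1 [|//]] // _ bc.
  by apply: plan_single_col col; rewrite bc big_seq1.
- move=> b1 _ b' c' x b'_gt0 c'_gt0 <- x00 row0 col0 sub.
  move=> /andP[_ nz_b'] /andP[_ nz_c'] bc size_bc.
  apply: plan_cons_both x00 row0 col0 (IH _ _ _ _ _ sub); first by move: size_bc => /=; lia.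
  exact: (residual_balance_eq nz_b' b'_gt0 nz_c' c'_gt0 bc).
- move=> b1 c1 a b' c' x b'_gt0 c'_gt0 _ Ea x00 row0 sub.
  move=> /andP[_ nz_b'] /andP[_ nz_c'] bc size_bc.
  apply: (plan_cons_row Ea x00 row0 (IH _ _ _ _ _ sub)); first by move: size_bc => /=; lia.
  by rewrite big_cons (@residual_balance b1 a b' c') // Ea.
- move=> b1 c1 a b' c' x b'_gt0 c'_gt0 _ _ Ea x00 col0 sub.
  move=> /andP[_ nz_b'] /andP[_ nz_c'] bc size_bc.
  apply: (plan_cons_col Ea x00 col0 (IH _ _ _ _ _ sub)); first by move: size_bc => /=; lia.
  by rewrite big_cons (@residual_balance c1 a c' b') // Ea bc.
Qed.

Lemma with_deletion_exists (P : seq K -> seq K -> (nat -> nat -> K) -> Prop) b c :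
  (exists y, P (filter nz b) (filter nz c) y) -> exists x, with_deletion zero P b c x.
Proof.
case=> y Py; exists (fun i j => if nz (nth zero b i) && nz (nth zero c j)
  then y (count nz (take i b)) (count nz (take j c)) else zero).
by exists y.
Qed.

Lemma nwc_exists b c : total b = total c -> exists x, nwc add zero b c x.
Proof.
have [n] := ubnP (size b + size c); elim: n b c => // n IH b c.
move=> /size_filter_nz bc_n bc; apply: with_deletion_exists.
move: (filter_all nz b) (filter_all nz c) (etrans (total_filter_nz b) bc) bc_n.
rewrite -(total_filter_nz c); move: (filter nz b) (filter nz c) => {b c bc}b c.
move=> nz_b nz_c bc bc_n; case: b nz_b bc bc_n => [|b1 [|b2 b']] nz_b bc bc_n.
- case: c nz_c bc {bc_n} => [|c1 c'] nz_c bc; first by exists (fun _ _ => zero); constructor.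
  by case: (total_neq0 nz_c isT); rewrite -bc big_nil.
- by exists (fun _ j => nth zero c j); apply: nwc_row.
case: c nz_c bc bc_n => [|c1 [|c2 c']] nz_c bc bc_n.
- by case: (total_neq0 nz_b isT); rewrite bc big_nil.
- by exists (fun i _ => nth zero [:: b1, b2 & b'] i); apply: nwc_col.
have nz_b' : all nz (b2 :: b') by case/andP: nz_b.
have nz_c' : all nz (c2 :: c') by case/andP: nz_c.
have [eq_b1c1|neq_b1c1] := EM (b1 = c1).
  subst c1.
  have [y sub] : exists y, nwc add zero (b2 :: b') (c2 :: c') y.
    by apply: IH; [move: bc_n => /=; lia | exact: (residual_balance_eq nz_b' isT nz_c' isT bc)].
  exists (fun i j => match i, j with
    | 0, 0 => b1 | i.+1, j.+1 => y i j | _, _ => zero end).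
  exact: nwc_eq.
have [[a Ea]|b1c1_nle] := EM (canon_le add b1 c1).
  have [y sub] : exists y, nwc add zero (b2 :: b') (a :: c2 :: c') y.
    apply: IH; first by move: bc_n => /=; lia.
    by rewrite [RHS]big_cons (@residual_balance b1 a (b2 :: b') (c2 :: c')) // Ea.
  exists (fun i j => if i is i'.+1 then y i' j else if j is 0 then b1 else zero).
  by apply: (nwc_le (a := a)).
have [/b1c1_nle[]|[a Ea]] := Htot b1 c1.
have [y sub] : exists y, nwc add zero (a :: b2 :: b') (c2 :: c') y.
  apply: IH; first by move: bc_n => /=; lia.
  by rewrite [LHS]big_cons (@residual_balance c1 a (c2 :: c') (b2 :: b')) // Ea bc.
exists (fun i j => if j is j'.+1 then y i j' else if i is 0 then c1 else zero).
by apply: (nwc_ge (a := a)).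
Qed.

Local Open Scope fset_scope.
Local Open Scope fmap_scope.

Section KRelations.
Variables (A V : choiceType).
Implicit Types (D : {fset A}) (t u v w : {fmap A -> V}).

Lemma krel_eq0 D (T : krel zero V D) t : t \notin krel_supp T -> T t = zero.
Proof. by move=> /negP tT; apply: contrapT => /(krel_suppP T t).2. Qed.

Lemma marg_neq0 D (T : krel zero V D) Z t :
  t \in krel_supp T -> marg add T Z t.[& Z] <> zero.
Proof.
move=> tT; rewrite /marg -big_filter (bigD1_seq t) ?filter_uniq ?fset_uniq //=;
  last by rewrite mem_filter eqxx.
by case/Hpos => /((krel_suppP T t).1 tT).
Qed.

Lemma marg_enum D (T : krel zero V D) Z w (us : seq {fmap A -> V}) :
  uniq us -> us =i [seq u <- krel_supp T | u.[& Z] == w] ->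
  \big[add/zero]_(u <- us) T u = marg add T Z w.
Proof.
move=> us_uniq usE; rewrite /marg -[RHS]big_filter.
by apply/perm_big/uniq_perm; rewrite ?filter_uniq ?fset_uniq.
Qed.

Lemma krel_of_fun D (f : {fmap A -> V} -> K) (S0 : {fset {fmap A -> V}}) :
  (forall t, f t <> zero -> t \in S0 /\ domf t = D) ->
  exists T : krel zero V D, T =1 f.
Proof.
move=> fP; pose supp := [fset t in S0 | nz (f t)].
have suppP t : t \in supp <-> f t <> zero.
  rewrite !inE; split=> [/andP[_ /nzP]//|ft]; rewrite (fP t ft).1; exact/nzP.
have domP t : t \in supp -> domf t = D by move=> /suppP /fP[].
by exists (KRel suppP domP).
Qed.

Variables (X Y : {fset A}).
Local Notation Z := (X `&` Y).

Lemma restrict_catl u v : domf u = X -> domf v = Y -> u.[& Z] = v.[& Z] ->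
  (u + v).[& X] = u.
Proof.
move=> uX vY uvZ; apply/fmapP => k; rewrite fnd_restrict fnd_cat.
have -> : (k \in domf v) = (k \in Y) by rewrite vY.
have [kX|kX] := boolP (k \in X); last by rewrite -uX in kX; rewrite not_fnd.
case: ifP => // kY; have kZ : k \in Z by rewrite inE kX kY.
by have := congr1 (fun f : {fmap A -> V} => f.[? k]) uvZ; rewrite !fnd_restrict kZ.
Qed.

Lemma restrict_catr u v : domf v = Y -> (u + v).[& Y] = v.
Proof. by move=> <-; apply: restrictf_cat_domr. Qed.

Lemma nwc_blocks_exist (R : krel zero V X) (S : krel zero V Y) :
  (forall w, marg add R Z w = marg add S Z w) ->
  forall w (us vs : seq {fmap A -> V}), uniq us -> uniq vs ->
    us =i [seq u <- krel_supp R | u.[& Z] == w] ->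
    vs =i [seq v <- krel_supp S | v.[& Z] == w] ->
    exists x, nwc add zero [seq R u | u <- us] [seq S v | v <- vs] x.
Proof.
move=> RS w us vs us_uniq vs_uniq usE vsE; apply: nwc_exists.
by rewrite !big_map (marg_enum us_uniq usE) (marg_enum vs_uniq vsE).
Qed.

Lemma nw_join_exists (R : krel zero V X) (S : krel zero V Y) :
  (forall w, marg add R Z w = marg add S Z w) ->
  exists W : krel zero V (X `|` Y), nw_join add R S W.
Proof.
move=> RS; pose us w := [seq u <- krel_supp R | u.[& Z] == w].
pose vs w := [seq v <- krel_supp S | v.[& Z] == w].
have enum_uniq D (T : krel zero V D) w : uniq [seq u <- krel_supp T | u.[& Z] == w].
  exact/filter_uniq/fset_uniq.
have nwc_block w : exists x, nwc add zero (map R (us w)) (map S (vs w)) x.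
  exact: nwc_blocks_exist RS w _ _ (enum_uniq _ R w) (enum_uniq _ S w) (frefl _) (frefl _).
have [xs xsP] := choice nwc_block.
pose f t := let u := t.[& X] in let v := t.[& Y] in let w := u.[& Z] in
  if [&& nz (marg add R Z w), u \in us w, v \in vs w & t == u + v]
  then xs w (index u (us w)) (index v (vs w)) else zero.
have [W WE] : exists W : krel zero V (X `|` Y), W =1 f.
  apply: (krel_of_fun (S0 := [fset (u + v : {fmap A -> V}) | u in krel_supp R, v in krel_supp S])).
  move=> t; rewrite /f /=; case: ifP => // /and4P[_ uU vV /eqP tE] _.
  move: uU vV; rewrite !mem_filter => /andP[_ uR] /andP[_ vS]; split.
    by apply/imfset2P; exists t.[& X] => //; exists t.[& Y].
  by rewrite tE domf_cat (krel_dom uR) (krel_dom vS).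
exists W, us, vs, xs; split; [|split].
- by move=> w _; split; rewrite ?enum_uniq.
- move=> w i j w_nz iu jv; have uU := mem_nth [fmap] iu; have vV := mem_nth [fmap] jv.
  set u := nth _ _ i in uU *; set v := nth _ _ j in vV *.
  move: (uU) (vV); rewrite !mem_filter => /andP[/eqP uZ uR] /andP[/eqP vZ vS].
  have uvX : (u + v).[& X] = u.
    by apply: restrict_catl; rewrite ?(krel_dom uR) ?(krel_dom vS) ?uZ ?vZ.
  rewrite WE /f /= uvX restrict_catr ?(krel_dom vS) // uZ uU vV eqxx.
  by rewrite (introT (nzP _) w_nz) /u /v !index_uniq ?enum_uniq.
- move=> t tW; rewrite WE /f /=; case: ifP => // /and4P[/nzP w_nz uU vV /eqP tE].
  case: tW; exists t.[& X].[& Z], (index t.[& X] (us t.[& X].[& Z])),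
    (index t.[& Y] (vs t.[& X].[& Z])).
  by rewrite !index_mem !nth_index.
Qed.

Section JoinMarginals.
Variables (R : krel zero V X) (S : krel zero V Y) (W : krel zero V (X `|` Y)).
Hypothesis RS : forall w, marg add R Z w = marg add S Z w.
Variables (us vs : {fmap A -> V} -> seq {fmap A -> V}) (xs : {fmap A -> V} -> nat -> nat -> K).
Hypothesis blocks : forall w, marg add R Z w <> zero ->
  [/\ uniq (us w), uniq (vs w),
       us w =i [seq u <- krel_supp R | u.[& Z] == w],
       vs w =i [seq v <- krel_supp S | v.[& Z] == w] &
       nwc add zero [seq R u | u <- us w] [seq S v | v <- vs w] (xs w)].
Hypothesis W_blocks : forall w i j, marg add R Z w <> zero ->
  i < size (us w) -> j < size (vs w) ->
  W (nth [fmap] (us w) i + nth [fmap] (vs w) j) = xs w i j.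
Hypothesis W_out : forall t, ~ (exists w i j, [/\ marg add R Z w <> zero,
  i < size (us w), j < size (vs w) & t = nth [fmap] (us w) i + nth [fmap] (vs w) j]) ->
  W t = zero.

Lemma mem_blockl w u : marg add R Z w <> zero -> u \in us w ->
  u \in krel_supp R /\ u.[& Z] = w.
Proof. by case/blocks=> _ _ -> _ _; rewrite mem_filter => /andP[/eqP]. Qed.

Lemma mem_blockr w v : marg add R Z w <> zero -> v \in vs w ->
  v \in krel_supp S /\ v.[& Z] = w.
Proof. by case/blocks=> _ _ _ -> _; rewrite mem_filter => /andP[/eqP]. Qed.

Lemma restrict_block w u v : marg add R Z w <> zero -> u \in us w -> v \in vs w ->
  (u + v).[& X] = u /\ (u + v).[& Y] = v.
Proof.
move=> w_nz /(mem_blockl w_nz)[uR uZ] /(mem_blockr w_nz)[vS vZ].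
by rewrite restrict_catl ?restrict_catr ?(krel_dom uR) ?(krel_dom vS) ?uZ ?vZ.
Qed.

Lemma block_plan w : marg add R Z w <> zero ->
  transport_plan [seq R u | u <- us w] [seq S v | v <- vs w] (xs w).
Proof.
move=> w_nz; have [us_uniq vs_uniq usE vsE nwc_w] := blocks w_nz.
by apply: nwc_plan nwc_w; rewrite !big_map (marg_enum us_uniq usE) (marg_enum vs_uniq vsE).
Qed.

Lemma join_block w u v : marg add R Z w <> zero -> u \in us w -> v \in vs w ->
  W (u + v) = xs w (index u (us w)) (index v (vs w)).
Proof. by move=> w_nz uU vV; rewrite -W_blocks ?index_mem ?nth_index. Qed.

Lemma join_supp t : W t <> zero ->
  exists w u v, [/\ marg add R Z w <> zero, u \in us w, v \in vs w & t = u + v].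
Proof.
move=> Wt; apply: contrapT => noblock; apply/Wt/W_out => -[w [i [j [w_nz iu jv tE]]]].
by apply: noblock; exists w, (nth [fmap] (us w) i), (nth [fmap] (vs w) j); rewrite !mem_nth.
Qed.

Lemma marg_join_l t : marg add W X t = R t.
Proof.
have [tR|tR] := boolP (t \in krel_supp R); last first.
  rewrite krel_eq0 // /marg big1_seq // => r /andP[/eqP rX _].
  apply: contrapT => /join_supp[w [u [v [w_nz uU vV rE]]]]; move: tR.
  by rewrite -rX rE (restrict_block w_nz uU vV).1 (mem_blockl w_nz uU).1.
set w := t.[& Z]; have w_nz : marg add R Z w <> zero := marg_neq0 tR.
have [us_uniq vs_uniq usE _ _] := blocks w_nz.
have tU : t \in us w by rewrite usE mem_filter eqxx.
have -> : marg add W X t = \big[add/zero]_(v <- vs w) W (t + v).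
  rewrite /marg -big_filter -(big_map (fun v => t + v) xpredT); apply: big_nz_eq.
  - exact/filter_uniq/fset_uniq.
  - rewrite map_inj_in_uniq // => v1 v2 v1V v2V /(congr1 (fun r : {fmap A -> V} => r.[& Y])).
    by rewrite (restrict_block w_nz tU v1V).2 (restrict_block w_nz tU v2V).2.
  move=> r /[dup] Wr /join_supp[w' [u [v [w'_nz uU vV rE]]]]; subst r.
  rewrite mem_filter ((krel_suppP W _).2 Wr) andbT (restrict_block w'_nz uU vV).1.
  apply/eqP/mapP => [ut|[v' v'V uvE]].
    subst u; have [_ w'E] := mem_blockl w'_nz uU.
    by exists v; rewrite // /w w'E.
  by rewrite -(restrict_block w'_nz uU vV).1 uvE (restrict_block w_nz tU v'V).1.
have [rows _] := block_plan w_nz.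
rewrite -[in RHS](nth_index [fmap] tU) -(nth_map _ zero) ?index_mem //.
rewrite -rows ?size_map ?index_mem // (big_nth [fmap]); apply: eq_big_nat => j /andP[_ jv].
by rewrite (join_block w_nz tU (mem_nth _ jv)) index_uniq.
Qed.

Lemma marg_join_r t : marg add W Y t = S t.
Proof.
have [tS|tS] := boolP (t \in krel_supp S); last first.
  rewrite krel_eq0 // /marg big1_seq // => r /andP[/eqP rY _].
  apply: contrapT => /join_supp[w [u [v [w_nz uU vV rE]]]]; move: tS.
  by rewrite -rY rE (restrict_block w_nz uU vV).2 (mem_blockr w_nz vV).1.
set w := t.[& Z]; have w_nz : marg add R Z w <> zero by rewrite RS; apply: marg_neq0.
have [us_uniq vs_uniq _ vsE _] := blocks w_nz.
have tV : t \in vs w by rewrite vsE mem_filter eqxx.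
have -> : marg add W Y t = \big[add/zero]_(u <- us w) W (u + t).
  rewrite /marg -big_filter -(big_map (fun u => u + t) xpredT); apply: big_nz_eq.
  - exact/filter_uniq/fset_uniq.
  - rewrite map_inj_in_uniq // => u1 u2 u1U u2U.
    move=> /(congr1 (fun r : {fmap A -> V} => r.[& X])).
    by rewrite (restrict_block w_nz u1U tV).1 (restrict_block w_nz u2U tV).1.
  move=> r /[dup] Wr /join_supp[w' [u [v [w'_nz uU vV rE]]]]; subst r.
  rewrite mem_filter ((krel_suppP W _).2 Wr) andbT (restrict_block w'_nz uU vV).2.
  apply/eqP/mapP => [vt|[u' u'U uvE]].
    subst v; have [_ w'E] := mem_blockr w'_nz vV.
    by exists u; rewrite // /w w'E.
  by rewrite -(restrict_block w'_nz uU vV).2 uvE (restrict_block w_nz u'U tV).2.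
have [_ cols] := block_plan w_nz.
rewrite -[in RHS](nth_index [fmap] tV) -(nth_map _ zero) ?index_mem //.
rewrite -cols ?size_map ?index_mem // (big_nth [fmap]); apply: eq_big_nat => i /andP[_ iu].
by rewrite (join_block w_nz (mem_nth _ iu) tV) index_uniq.
Qed.

End JoinMarginals.

Lemma nw_join_margins (R : krel zero V X) (S : krel zero V Y) (W : krel zero V (X `|` Y)) :
  (forall w, marg add R Z w = marg add S Z w) -> nw_join add R S W ->
  (forall t, marg add W X t = R t) /\ (forall t, marg add W Y t = S t).
Proof.
move=> RS [us [vs [xs [blocks [W_blocks W_out]]]]].
by split=> t; [apply: (marg_join_l RS blocks) | apply: (marg_join_r RS blocks)].
Qed.

End KRelations.

End NorthwestCorner.

Local Open Scope fset_scope.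
Local Open Scope fmap_scope.

Theorem proposition24 (K : Type) (add : K -> K -> K) (zero : K)
    (HK : comm_monoid add zero) (Hpos : positive_monoid add zero)
    (Hwc : weakly_cancellative add zero)
    (Htot : totally_canon_preordered add)
    (A V : choiceType) (X Y : {fset A})
    (R : krel zero V X) (S : krel zero V Y) :
  (forall w, marg add R (X `&` Y) w = marg add S (X `&` Y) w) ->
  (* the northwest corner procedure can be carried out: *)
  (forall w, marg add R (X `&` Y) w <> zero ->
     forall us vs : seq {fmap A -> V},
       uniq us -> uniq vs ->
       us =i [seq u <- krel_supp R | u.[& X `&` Y] == w] ->
       vs =i [seq v <- krel_supp S | v.[& X `&` Y] == w] ->
       exists x, nwc add zero [seq R u | u <- us] [seq S v | v <- vs] x)
  /\ (exists W : krel zero V (X `|` Y), nw_join add R S W)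
  (* every northwest corner join W satisfies W[X] = R and W[Y] = S: *)
  /\ (forall W : krel zero V (X `|` Y), nw_join add R S W ->
        (forall t, marg add W X t = R t) /\ (forall t, marg add W Y t = S t)).
Proof.
move=> RS; split; [|split].
- by move=> w _; apply: (nwc_blocks_exist HK Hpos Hwc Htot RS).
- exact: (nw_join_exists HK Hpos Hwc Htot RS).
- by move=> W; apply: (nw_join_margins HK Hpos Hwc RS).
Qed.
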